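(* Let $G=AB$ be a finite $\pi$-separable group that is the product of subgroups $A$ and $B$, and suppose $G=AB$ is a core-factorisation. Let $H$ be a Hall $\pi$-subgroup of $G$ such that $H=(H\cap A)(H\cap B)$, with $H\cap A$ a Hall $\pi$-subgroup of $A$ and $H\cap B$ a Hall $\pi$-subgroup of $B$ (such an $H$ always exists). Then, if $H\neq 1$, $H=(H\cap A)(H\cap B)$ is also a core-factorisation.
   Context: $\pi$ is a set of primes. A subgroup $U$ of $G$ covers a section $V/W$ ($W\trianglelefteq V\le G$) if $W(U\cap V)=V$. If $1\neq G=AB$ is a product of subgroups $A$ and $B$, then $G=AB$ is called a core-factorisation if $G$ possesses a chief series each of whose chief factors is covered by $A$ or by $B$. *)

From mathcomp Require Import all_boot all_fingroup all_solvable.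
Set Implicit Arguments. Unset Strict Implicit. Unset Printing Implicit Defensive.
Local Open Scope group_scope.

(* U covers the section V/W  iff  W (U :&: V) = V. *)
Definition covers (gT : finGroupType) (U V W : {set gT}) : bool :=
  W * (U :&: V) == V.

Definition pi_separable (gT : finGroupType) (pi : nat_pred) (G : {group gT}) : Prop :=
  exists s : seq {group gT},
    path [rel H K : {group gT} | (H <| K) && (pi.-group (K / H) || pi^'.-group (K / H))]
         1%G s /\ last 1%G s = G.

Definition core_factorisation (gT : finGroupType) (G : {group gT}) (A B : {set gT}) : Prop :=
  [/\ G :!=: 1, A * B = G &
      exists s : seq {group gT},
        path [rel V U : {group gT} | chief_factor G V U && (covers A U V || covers B U V)]
             1%G s /\ last 1%G s = G].

From mathcomp Require Import all_boot all_fingroup all_solvable.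
Set Implicit Arguments. Unset Strict Implicit.
Local Open Scope group_scope.

(* Let 1 = G_0 < ... < G_n = G be a chief series of G each
   of whose factors is covered by A or by B.  Intersecting with H gives a
   normal series 1 = H :&: G_0 <= ... <= H :&: G_n = H of H, and:
   - (Hall_covers_setI) if a subgroup K of G with H :&: K a Hall
     pi-subgroup of K covers a normal section U/V of G, then H :&: K covers
     (H :&: U)/(H :&: V).  This is an order computation: Hall pi-subgroups
     meet normal subgroups in Hall pi-subgroups, so the identity
     |V| |K :&: U| = |U| |K :&: V| survives on pi-parts;
   - (chief_series_between) any inclusion X <= Y of normal subgroups of H is
     refined by a chief series of H running from X to Y;
   - (covers_subsection) a subgroup covering Y/X covers every section U/V
     with X <= V <= U <= Y.
   Refining each step H :&: G_i <= H :&: G_(i+1) by the second fact therefore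
   yields a chief series of H all of whose factors are covered by H :&: A or
   H :&: B (lemma covered_chief_series_setI).  The pi-separability of G is
   only needed for the existence of H, which the theorem assumes. *)

Definition covered_chief_step (gT : finGroupType) (G A B : {set gT}) :=
  [rel V U : {group gT} | chief_factor G V U && (covers A U V || covers B U V)].

Lemma Hall_covers_setI (gT : finGroupType) (pi : nat_pred) (G K H U V : {group gT}) :
    pi.-Hall(G) H -> pi.-Hall(K) (H :&: K) -> K \subset G ->
    U <| G -> V <| G -> V \subset U -> covers K U V ->
  covers (H :&: K) (H :&: U) (H :&: V).
Proof.
move=> hallH hallHK sKG nUG nVG sVU /eqP covK.
have cardHU : #|H :&: U| = (#|U|`_pi)%N := card_Hall (Hall_setI_normal nUG hallH).
have cardHV : #|H :&: V| = (#|V|`_pi)%N := card_Hall (Hall_setI_normal nVG hallH).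
have traceHK (N : {group gT}) : N <| G -> #|H :&: K :&: N| = (#|K :&: N|`_pi)%N.
  move=> nNG.
  have -> : H :&: K :&: N = H :&: K :&: (K :&: N).
    by rewrite setIA -(setIA H K K) setIid.
  exact: card_Hall (Hall_setI_normal (normalGI sKG nNG) hallHK).
have sHV_U : H :&: V \subset H :&: U by rewrite setIS.
(* |V| |K :&: U| = |U| |K :&: V|, since V (K :&: U) = U and V :&: K = K :&: V. *)
have orderK : (#|V| * #|K :&: U| = #|U| * #|K :&: V|)%N.
  by rewrite (mul_cardG V (K :&: U)%G) /= covK setIA (setIC V) -setIA (setIidPl sVU).
have orderH : (#|H :&: V| * #|H :&: K :&: U| = #|H :&: U| * #|H :&: K :&: V|)%N.
  by rewrite cardHV cardHU !traceHK // -!partnM ?cardG_gt0 // orderK.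
(* H :&: V and H :&: K :&: U meet in H :&: K :&: V, so by orderH their
   product, which lies in H :&: U, has order |H :&: U|. *)
have meetH : (H :&: V) :&: (H :&: K :&: U) = H :&: K :&: V.
  by rewrite setIACA (setIidPl sVU) setIA setIid.
rewrite /covers setIACA setIid setIA eqEcard.
rewrite mulG_subG sHV_U setSI ?subsetIl //=.
have := mul_cardG (H :&: V)%G (H :&: K :&: U)%G; rewrite /= meetH orderH => eqHU.
by rewrite -(leq_pmul2r (cardG_gt0 (H :&: K :&: V)%G)) /= eqHU.
Qed.

(* Every inclusion X <= Y of normal subgroups of H can be refined by a chief
   series of H running from X to Y: repeatedly insert a minimal normal
   subgroup of H properly above the current term and below Y. *)
Lemma chief_series_between (gT : finGroupType) (H X Y : {group gT}) :
    X <| H -> Y <| H -> X \subset Y ->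
  exists t : seq {group gT},
    path [rel V U : {group gT} | [&& chief_factor H V U, X \subset V & U \subset Y]] X t
    /\ last X t = Y.
Proof.
move=> + nYH; have [n] := ubnP (#|Y| - #|X|); elim: n X => // n IHn X.
move=> ltYX nXH sXY; have [eqXY | neXY] := eqVneq (X : {set gT}) Y.
  by exists [::]; split=> //=; apply: val_inj.
have ltXY : X \proper Y by rewrite properEneq neXY.
have [|M minM] := @ex_mingroup gT
  (fun M : {group gT} => [&& X \proper M, M \subset Y & H \subset 'N(M)]).
  by exists Y; rewrite ltXY subxx normal_norm.
have [/and3P [ltXM sMY nMH] minM_P] := mingroupP minM.
have nsMH : M <| H by rewrite /normal nMH (subset_trans sMY) ?normal_sub.
have [|t [chainMY lastMY]] := IHn M _ nsMH sMY.
  rewrite -ltnS (leq_trans _ ltYX) // ltnS ltn_sub2l // proper_card //.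
(* M/X is a chief factor of H: a normal subgroup of H strictly between X
   and M would contradict the minimality of M. *)
have chiefXM : chief_factor H X M.
  rewrite /chief_factor nsMH andbT; apply/maxgroupP; split.
    by rewrite ltXM normal_norm.
  move=> N /andP [ltNM nNH] sXN; apply/eqP/negPn/negP => neNX.
  have ltXN : X \proper N by rewrite properEneq eq_sym neNX.
  have := proper_neq ltNM.
  by rewrite (minM_P N) ?ltXN ?nNH ?(subset_trans (proper_sub ltNM) sMY) ?proper_sub ?eqxx.
exists (M :: t); split=> //=; rewrite chiefXM subxx sMY /=.
apply: sub_path chainMY => V U /= /and3P [-> sMV ->].
by rewrite (subset_trans (proper_sub ltXM) sMV).
Qed.

(* A subgroup covering the section Y/X covers every section U/V lying
   between X and Y (Dedekind's modular law). *)
Lemma covers_subsection (gT : finGroupType) (K X Y U V : {group gT}) :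
    covers K Y X -> X \subset V -> V \subset U -> U \subset Y ->
  covers K U V.
Proof.
move=> /eqP covK sXV sVU sUY.
rewrite /covers eqEsubset mulG_subG sVU subsetIr /=.
have traceU : (K :&: Y) :&: U = K :&: U by rewrite -setIA (setIidPr sUY).
have : X * ((K :&: Y) :&: U) = U.
  by rewrite group_modl ?(subset_trans sXV) // covK; apply/setIidPr.
by rewrite traceU => {1}<-; apply: mulSg.
Qed.

Section HallTraces.

Variables (gT : finGroupType) (pi : nat_pred) (G A B H : {group gT}).
Hypotheses (hallH : pi.-Hall(G) H) (sAG : A \subset G) (sBG : B \subset G).
Hypotheses (hallHA : pi.-Hall(A) (H :&: A)) (hallHB : pi.-Hall(B) (H :&: B)).

Lemma covered_chief_step_setI (V U : {group gT}) :
    V <| G -> covered_chief_step G A B V U ->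
  exists t : seq {group gT},
    path (covered_chief_step H (H :&: A) (H :&: B)) (H :&: V)%G t
    /\ last (H :&: V)%G t = (H :&: U)%G.
Proof.
move=> nsVG /andP [chiefVU covAB]; have [maxV nsUG] := andP chiefVU.
have sVU : V \subset U by have [/andP [/proper_sub]] := maxgroupP maxV.
have sHG : H \subset G by case/andP: hallH.
have [t [chainHVU lastHVU]] :=
  chief_series_between (normalGI sHG nsVG) (normalGI sHG nsUG) (setIS H sVU).
exists t; split=> //; apply: sub_path chainHVU => V' U' /= /and3P [chiefV'U' sHV_V' sU'_HU].
have sV'U' : V' \subset U'.
  by have [/andP [/proper_sub]] := maxgroupP (proj1 (andP chiefV'U')).
have coversH (K : {group gT}) :
    pi.-Hall(K) (H :&: K) -> K \subset G -> covers K U V -> covers (H :&: K) U' V'.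
  move=> hallHK sKG covK.
  exact: covers_subsection (Hall_covers_setI hallH hallHK sKG nsUG nsVG sVU covK)
    sHV_V' sV'U' sU'_HU.
rewrite chiefV'U' /=; case/orP: covAB => [covA | covB].
  by rewrite coversH.
by rewrite (coversH B) ?orbT.
Qed.

Lemma covered_chief_series_setI (s : seq {group gT}) (V : {group gT}) :
    V <| G -> path (covered_chief_step G A B) V s ->
  exists t : seq {group gT},
    path (covered_chief_step H (H :&: A) (H :&: B)) (H :&: V)%G t
    /\ last (H :&: V)%G t = (H :&: last V s)%G.
Proof.
elim: s V => [|U s IHs] V nsVG /=; first by exists [::].
case/andP=> stepVU chainUs; have nsUG : U <| G by case/andP: (proj1 (andP stepVU)).
have [t1 [chain1 last1]] := covered_chief_step_setI nsVG stepVU.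
have [t2 [chain2 last2]] := IHs U nsUG chainUs.
by exists (t1 ++ t2); rewrite cat_path last_cat last1 chain1 last2.
Qed.

End HallTraces.

Unset Implicit Arguments. Set Strict Implicit.
Theorem mainTheorem2 (gT : finGroupType) (pi : nat_pred) (G A B H : {group gT}) :
  pi_separable pi G ->
  A * B = G ->
  core_factorisation G A B ->
  pi.-Hall(G) H ->
  H = (H :&: A) * (H :&: B) :> {set gT} ->
  pi.-Hall(A) (H :&: A) ->
  pi.-Hall(B) (H :&: B) ->
  H :!=: 1 ->
  core_factorisation H (H :&: A) (H :&: B).
Proof.
move=> _ eqAB [_ _ [s [chainG lastG]]] hallH eqH hallHA hallHB ntH.
have sAG : A \subset G by rewrite -eqAB mulG_subl.
have sBG : B \subset G by rewrite -eqAB mulG_subr.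
have sHG : H \subset G by case/andP: hallH.
have [t [chainH lastH]] :=
  covered_chief_series_setI hallH sAG sBG hallHA hallHB (normal1 G) chainG.
have trace1 : (H :&: 1)%G = 1%G by apply: val_inj; rewrite /= setIg1.
split=> //; exists t; rewrite -trace1; split=> //.
by rewrite lastH lastG; apply: val_inj; apply/setIidPl.
Qed.
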